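(* Let a group $G$ act properly and isometrically on a proper geodesic metric space $X$ with basepoint $o$, let $f\in G$ be a contracting element, and let $C>0$ be such that every geodesic segment with both endpoints in $\mathrm{Ax}(f)$ is $C$-contracting. Given $r,M>0$, there exist $\hat r=\hat r(r,C,M)$ and $L_1=L_1(C,M)>0$ with the following property. Let $h\in E(f)$ satisfy $d(o,ho)>L_1$, let $g\in G$ and $\theta\in(0,1]$, and let $\alpha,\beta$ be two geodesics from $B(o,M)$ to $B(go,M)$. If $\alpha$ contains a $\theta$-segment with an $(r,h)$-barrier, then $\beta$ contains some $\theta$-segment with an $(\hat r,h)$-barrier.
   Context: A closed $U$ is $C$-contracting if every geodesic $\gamma$ with $d(\gamma,U)\ge C$ has $\mathrm{diam}(\pi_U(\gamma))\le C$ ($\pi_U$ nearest-point projection). An infinite-order $f$ is contracting if $n\mapsto f^no$ is a quasi-isometric embedding with contracting image. $E(f)=\{g\in G:\exists n>0,\ gf^ng^{-1}=f^{\pm n}\}$ is the maximal elementary subgroup containing $f$, and $\mathrm{Ax}(f)=E(f)\cdot o$. A $\theta$-segment of a geodesic $\gamma$ is a closed connected subsegment of length $\theta\ell(\gamma)$. A segment $\sigma$ has an $(r,h)$-barrier if there is $t\in G$ with $d(to,\sigma)\le r$ and $d(tho,\sigma)\le r$. *)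

From Stdlib Require Import Reals Lra ZArith List.
Set Implicit Arguments.
Open Scope R_scope.

Record MetricSpace := {
  mpt :> Type;
  mdist : mpt -> mpt -> R;
  dist_ge0 : forall x y, 0 <= mdist x y;
  dist_eq0 : forall x y, mdist x y = 0 <-> x = y;
  dist_sym : forall x y, mdist x y = mdist y x;
  dist_tri : forall x y z, mdist x z <= mdist x y + mdist y z }.
Arguments mdist {m} x y.

Record Group := {
  gel :> Type;
  gmul : gel -> gel -> gel;
  ginv : gel -> gel;
  gone : gel;
  gmulA : forall a b c, gmul a (gmul b c) = gmul (gmul a b) c;
  gmul1l : forall a, gmul gone a = a;
  gmul1r : forall a, gmul a gone = a;
  gmulVl : forall a, gmul (ginv a) a = gone;
  gmulVr : forall a, gmul a (ginv a) = gone }.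
Arguments gmul {g} a b.
Arguments ginv {g} a.
Arguments gone {g}.

Definition gpow (G : Group) (g : G) (n : Z) : G :=
  match n with
  | Z0 => gone
  | Zpos p => Nat.iter (Pos.to_nat p) (gmul g) gone
  | Zneg p => Nat.iter (Pos.to_nat p) (gmul (ginv g)) gone
  end.

Arguments gpow {G} g n.

Definition isometric_action (G : Group) (X : MetricSpace) (act : G -> X -> X) :=
  (forall x, act gone x = x) /\
  (forall g h x, act (gmul g h) x = act g (act h x)) /\
  (forall g x y, mdist (act g x) (act g y) = mdist x y).

Arguments isometric_action {G X} act.

(* metrically proper: for every ball B(x,r), only finitely many g with gB ∩ B ≠ ∅ *)
Definition proper_action (G : Group) (X : MetricSpace) (act : G -> X -> X) :=
  forall (x : X) (r : R), exists l : list G, forall g : G,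
    (exists y : X, mdist x y <= r /\ mdist x (act g y) <= r) -> In g l.

Arguments proper_action {G X} act.

Definition is_geodesic (X : MetricSpace) (l : R) (gam : R -> X) :=
  0 <= l /\ forall s t, 0 <= s <= l -> 0 <= t <= l -> mdist (gam s) (gam t) = Rabs (s - t).

Arguments is_geodesic {X} l gam.

Definition seg (X : MetricSpace) (gam : R -> X) (a b : R) : X -> Prop :=
  fun x => exists s, a <= s <= b /\ x = gam s.

Arguments seg {X} gam a b.

Definition geodesic_space (X : MetricSpace) :=
  forall x y : X, exists l gam, is_geodesic l gam /\ gam 0 = x /\ gam l = y.

(* proper: closed balls are (sequentially) compact *)
Definition proper_space (X : MetricSpace) :=
  forall (x : X) (r : R) (u : nat -> X), (forall n, mdist x (u n) <= r) ->
    exists (phi : nat -> nat) (y : X),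
      (forall n, (phi n < phi (S n))%nat) /\ mdist x y <= r /\
      Un_cv (fun n => mdist (u (phi n)) y) 0.

Definition closed_set (X : MetricSpace) (U : X -> Prop) :=
  forall x, (forall eps, 0 < eps -> exists u, U u /\ mdist x u < eps) -> U x.

Arguments closed_set {X} U.

Definition dist_set_le (X : MetricSpace) (x : X) (U : X -> Prop) (r : R) :=
  forall eps, 0 < eps -> exists u, U u /\ mdist x u < r + eps.

Arguments dist_set_le {X} x U r.

Definition nearest (X : MetricSpace) (U : X -> Prop) (x u : X) :=
  U u /\ forall v, U v -> mdist x u <= mdist x v.

Arguments nearest {X} U x u.

Definition contracting_set (X : MetricSpace) (C : R) (U : X -> Prop) :=
  closed_set U /\
  forall l gam, is_geodesic l gam ->
    (forall t u, 0 <= t <= l -> U u -> C <= mdist (gam t) u) ->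
    forall t1 t2 p q, 0 <= t1 <= l -> 0 <= t2 <= l ->
      nearest U (gam t1) p -> nearest U (gam t2) q -> mdist p q <= C.

Arguments contracting_set {X} C U.

(* f is contracting: infinite order, n |-> f^n o is a QI embedding of Z
   with contracting image *)
Definition contracting_element (G : Group) (X : MetricSpace) (act : G -> X -> X)
    (o : X) (f : G) :=
  (forall n : Z, n <> 0%Z -> gpow f n <> gone) /\
  (exists lam c, 1 <= lam /\ 0 <= c /\ forall m n : Z,
     / lam * Rabs (IZR (m - n)) - c <= mdist (act (gpow f m) o) (act (gpow f n) o) /\
     mdist (act (gpow f m) o) (act (gpow f n) o) <= lam * Rabs (IZR (m - n)) + c) /\
  (exists C', contracting_set C' (fun x => exists n : Z, x = act (gpow f n) o)).

Arguments contracting_element {G X} act o f.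

Definition Ef (G : Group) (f : G) : G -> Prop :=
  fun g => exists n : Z, (0 < n)%Z /\
    (gmul (gmul g (gpow f n)) (ginv g) = gpow f n \/
     gmul (gmul g (gpow f n)) (ginv g) = gpow f (- n)).

Arguments Ef {G} f _.

Definition Ax (G : Group) (X : MetricSpace) (act : G -> X -> X) (o : X) (f : G) : X -> Prop :=
  fun x => exists g, Ef f g /\ x = act g o.

Arguments Ax {G X} act o f _.

Definition has_barrier_theta_seg (G : Group) (X : MetricSpace) (act : G -> X -> X)
    (o : X) (r : R) (h : G) (theta : R) (l : R) (gam : R -> X) :=
  exists a, 0 <= a /\ a + theta * l <= l /\
    exists t : G, dist_set_le (act t o) (seg gam a (a + theta * l)) r /\
                  dist_set_le (act (gmul t h) o) (seg gam a (a + theta * l)) r.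
Arguments has_barrier_theta_seg {G X} act o r h theta l gam.

(* Translating by the inverse of the barrier element t, alpha passes near o and
   near h o.  The geodesic [o, h o] has endpoints in Ax(f), so it is C-contracting;
   nearest-point projection to it is then coarsely 1-Lipschitz, and a geodesic
   whose endpoint projections are more than C apart comes (2C+2)-close to both of
   them.  Hence the endpoints of alpha project near o and h o, so do those of beta
   (they are 2M-close to alpha's), and once d(o, h o) is large beta itself passes
   near o and h o.  Comparing arc-length parameters along alpha and beta fits both
   visits into one theta-segment of beta.  When d(o, h o) is small, the start of
   beta is a barrier for a larger constant, which is why L1 = 1 suffices. *)

From Pilot Require Import Defs.
From Stdlib Require Import Reals ZArith Lra Lia Classical.
Open Scope R_scope.
Set Implicit Arguments.

(* Stdlib's [Reals] exports its own [dist_tri] and [dist_sym], which shadow the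
   fields of [MetricSpace]. *)
Lemma mdist_tri (X : MetricSpace) (x y z : X) : mdist x z <= mdist x y + mdist y z.
Proof. exact (Defs.dist_tri X x y z). Qed.

Lemma mdist_sym (X : MetricSpace) (x y : X) : mdist x y = mdist y x.
Proof. exact (Defs.dist_sym X x y). Qed.

Arguments mdist_tri {X} x y z.
Arguments mdist_sym {X} x y.

Lemma mdist_le_via_center {X : MetricSpace} {z x y : X} {M : R} :
  mdist z x <= M -> mdist z y <= M -> mdist x y <= 2 * M.
Proof. intros Hx Hy. pose proof (mdist_tri x z y). rewrite (mdist_sym x z) in *. lra. Qed.

Definition between (X : MetricSpace) (U : X -> Prop) (x y : X) :=
  forall u, U u -> mdist x u + mdist u y = mdist x y.
Arguments between {X} U x y.

Lemma between_sym (X : MetricSpace) (U : X -> Prop) x y : between U x y -> between U y x.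
Proof.
  intros H u Hu. rewrite (mdist_sym y u), (mdist_sym u x), (mdist_sym y x), <- (H u Hu). ring.
Qed.

Section Geodesic.
Variables (X : MetricSpace) (l : R) (gam : R -> X).
Hypothesis Hgam : is_geodesic l gam.

Lemma geodesic_dist a b : 0 <= a <= l -> 0 <= b <= l -> a <= b -> mdist (gam a) (gam b) = b - a.
Proof. intros Ha Hb Hab. rewrite (proj2 Hgam) by lra. rewrite Rabs_left1; lra. Qed.

Lemma geodesic_dist_le a b : 0 <= a <= l -> 0 <= b <= l -> mdist (gam a) (gam b) <= Rabs (a - b).
Proof. intros Ha Hb. rewrite (proj2 Hgam) by lra. lra. Qed.

Lemma geodesic_length : mdist (gam 0) (gam l) = l.
Proof. pose proof (proj1 Hgam). rewrite geodesic_dist; lra. Qed.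

Lemma geodesic_restrict s : 0 <= s <= l -> is_geodesic s gam.
Proof. intros Hs. split; [lra|]. intros; apply Hgam; lra. Qed.

Lemma geodesic_reverse : is_geodesic l (fun s => gam (l - s)).
Proof.
  destruct Hgam as [Hl H]. split; [lra|]. intros s t Hs Ht. rewrite H by lra.
  replace (l - s - (l - t)) with (- (s - t)) by ring. apply Rabs_Ropp.
Qed.

Lemma geodesic_isometry (phi : X -> X) :
  (forall x y, mdist (phi x) (phi y) = mdist x y) -> is_geodesic l (fun s => phi (gam s)).
Proof. intros Hphi. split; [apply Hgam|]. intros; rewrite Hphi; apply Hgam; lra. Qed.

End Geodesic.

Lemma lipschitz_continuity_pt (F : R -> R) :
  (forall x y, Rabs (F x - F y) <= Rabs (x - y)) -> forall c, continuity_pt F c.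
Proof.
  intros HF c eps Heps. exists eps; split; [exact Heps|].
  intros x [_ Hx]. simpl in *. unfold R_dist in *. pose proof (HF x c). lra.
Qed.

Lemma nearest_seg_exists (X : MetricSpace) l (gam : R -> X) (z : X) :
  is_geodesic l gam -> exists u, nearest (seg gam 0 l) z u.
Proof.
  intros Hgam. pose proof (proj1 Hgam) as Hl.
  (* [gam] is arbitrary outside [0, l], so continuity is only available after clamping. *)
  set (clamp := fun s => Rmax 0 (Rmin l s)).
  assert (Hclamp : forall s, 0 <= clamp s <= l).
  { intro s; unfold clamp, Rmax, Rmin; repeat destruct Rle_dec; lra. }
  assert (Hclamp_id : forall s, 0 <= s <= l -> clamp s = s).
  { intros s Hs; unfold clamp, Rmax, Rmin; repeat destruct Rle_dec; lra. }
  assert (Hclamp_lip : forall s t, Rabs (clamp s - clamp t) <= Rabs (s - t)).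
  { intros s t; unfold clamp, Rmax, Rmin, Rabs.
    repeat destruct Rle_dec; repeat destruct Rcase_abs; lra. }
  set (F := fun s => mdist z (gam (clamp s))).
  destruct (continuity_ab_min F 0 l Hl) as [m [Hmin Hm]].
  { intros c _. apply lipschitz_continuity_pt. intros s t. unfold F.
    pose proof (mdist_tri z (gam (clamp s)) (gam (clamp t))).
    pose proof (mdist_tri z (gam (clamp t)) (gam (clamp s))).
    pose proof (geodesic_dist_le Hgam (Hclamp s) (Hclamp t)).
    pose proof (Hclamp_lip s t). rewrite (mdist_sym (gam (clamp t))) in *.
    unfold Rabs in *; repeat destruct Rcase_abs; lra. }
  exists (gam m). split.
  - exists m; split; [lra|reflexivity].
  - intros v [s [Hs ->]]. pose proof (Hmin s Hs) as H. unfold F in H.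
    rewrite !Hclamp_id in H by lra. exact H.
Qed.

Lemma dist_set_le_seg_point (X : MetricSpace) (gam : R -> X) a b z r :
  dist_set_le z (seg gam a b) r -> exists s, a <= s <= b /\ mdist z (gam s) < r + 1.
Proof. intros H. destruct (H 1 Rlt_0_1) as [x [[s [Hs ->]] Hd]]. exists s; auto. Qed.

Lemma dist_set_le_mono (X : MetricSpace) (x : X) (U : X -> Prop) r r' :
  r <= r' -> dist_set_le x U r -> dist_set_le x U r'.
Proof. intros Hr H eps Heps. destruct (H eps Heps) as [u [Hu Hd]]. exists u; split; [exact Hu|lra]. Qed.

Lemma seg_point_dist_set_le (X : MetricSpace) (gam : R -> X) a b z r s :
  a <= s <= b -> mdist z (gam s) <= r -> dist_set_le z (seg gam a b) r.
Proof. intros Hs Hd eps Heps. exists (gam s). split; [exists s; auto|lra]. Qed.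

Lemma approx_first_hit (P : R -> Prop) (l : R) :
  0 <= l -> ~ P 0 -> (exists s, 0 <= s <= l /\ P s) ->
  exists s1 s2, 0 <= s1 <= s2 /\ s2 <= l /\ s2 - s1 <= 1 /\ P s2 /\
    forall s, 0 <= s <= s1 -> ~ P s.
Proof.
  intros Hl HP0 [s0 [Hs0 HPs0]].
  set (A := fun s => 0 <= s <= l /\ forall s', 0 <= s' <= s -> ~ P s').
  assert (A0 : A 0) by (split; [lra|]; intros s' Hs'; replace s' with 0 by lra; exact HP0).
  destruct (completeness A) as [m [Hub Hlub]].
  { exists l. intros s [Hs _]. lra. }
  { exists 0; exact A0. }
  assert (Hm0 : 0 <= m) by (apply Hub; exact A0).
  assert (Hs1 : exists s1, A s1 /\ m - /2 < s1).
  { apply NNPP. intro Hn. assert (m <= m - /2); [|lra]. apply Hlub. intros a Ha.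
    apply Rnot_lt_le. intro H. apply Hn. exists a; auto. }
  destruct Hs1 as [s1 [[Hs1 HA1] Hs1m]].
  set (s := Rmin (m + /2) l).
  assert (HnA : ~ A s).
  { intros [Hs HAs]. unfold s, Rmin in *. destruct Rle_dec.
    - pose proof (Hub _ (conj Hs HAs)). lra.
    - apply (HAs s0); auto. }
  assert (Hhit : exists s2, 0 <= s2 <= s /\ P s2).
  { apply NNPP. intro Hn. apply HnA. split.
    - unfold s, Rmin; destruct Rle_dec; lra.
    - intros s' Hs' HP. apply Hn. exists s'; auto. }
  destruct Hhit as [s2 [Hs2 HP2]].
  assert (s1 < s2) by (apply Rnot_le_lt; intro H; apply (HA1 s2); auto; lra).
  exists s1, s2. unfold s, Rmin in Hs2; destruct Rle_dec; repeat split; auto; lra.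
Qed.

Section ContractingSet.
Variables (X : MetricSpace) (U : X -> Prop) (C : R).
Hypotheses (HC : 0 <= C) (HU : contracting_set C U).
Hypothesis Hnear : forall z, exists u, nearest U z u.

Lemma far_geodesic_proj_close l (gam : R -> X) p q :
  is_geodesic l gam -> (forall t u, 0 <= t <= l -> U u -> C <= mdist (gam t) u) ->
  nearest U (gam 0) p -> nearest U (gam l) q -> mdist p q <= C.
Proof.
  intros Hgam Hfar Hp Hq. pose proof (proj1 Hgam).
  apply (proj2 HU l gam Hgam Hfar 0 l); auto; lra.
Qed.

Lemma geodesic_enters_near_first_proj l (gam : R -> X) p q :
  is_geodesic l gam -> nearest U (gam 0) p -> nearest U (gam l) q -> C < mdist p q ->
  exists s, 0 <= s <= l /\ mdist (gam s) p <= 2 * C + 2.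
Proof.
  intros Hgam Hp Hq Hpq. pose proof (proj1 Hgam) as Hl.
  set (P := fun s => exists u, U u /\ mdist (gam s) u < C).
  destruct (classic (P 0)) as [[u [Hu Hd]]|HP0].
  { exists 0; split; [lra|]. pose proof (proj2 Hp u Hu). lra. }
  destruct (classic (exists s, 0 <= s <= l /\ P s)) as [Hhit|Hnohit].
  2:{ exfalso. apply (Rlt_not_le _ _ Hpq). apply (far_geodesic_proj_close Hgam); auto.
      intros t u Ht Hu. apply Rnot_lt_le. intro H. apply Hnohit. exists t; split; [|exists u]; auto. }
  (* The first entry into the C-neighbourhood is located up to an error of 1,
     whence the constant 2C+2. *)
  destruct (@approx_first_hit P l Hl HP0 Hhit)
    as [s1 [s2 [Hs12 [Hs2 [Hstep [[u [Hu Hd2]] Hfar]]]]]].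
  destruct (Hnear (gam s1)) as [p1 Hp1].
  assert (Hpp1 : mdist p p1 <= C).
  { apply (far_geodesic_proj_close (geodesic_restrict Hgam (s := s1) ltac:(lra))); auto.
    intros t v Ht Hv. apply Rnot_lt_le. intro H. apply (Hfar t Ht). exists v; auto. }
  assert (Hs12d : mdist (gam s1) (gam s2) = s2 - s1) by (apply (geodesic_dist Hgam); lra).
  pose proof (proj2 Hp1 u Hu). pose proof (mdist_tri (gam s1) (gam s2) u).
  pose proof (mdist_tri (gam s2) (gam s1) p1). pose proof (mdist_tri (gam s2) p1 p).
  rewrite (mdist_sym (gam s2) (gam s1)), (mdist_sym p1 p) in *.
  exists s2; split; lra.
Qed.

Lemma geodesic_enters_near_last_proj l (gam : R -> X) p q :
  is_geodesic l gam -> nearest U (gam 0) p -> nearest U (gam l) q -> C < mdist p q ->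
  exists s, 0 <= s <= l /\ mdist (gam s) q <= 2 * C + 2.
Proof.
  intros Hgam Hp Hq Hpq.
  destruct (@geodesic_enters_near_first_proj l (fun s => gam (l - s)) q p (geodesic_reverse Hgam))
    as [s [Hs Hd]].
  - rewrite Rminus_0_r. exact Hq.
  - rewrite Rminus_diag. exact Hp.
  - rewrite mdist_sym; exact Hpq.
  - exists (l - s); split; [lra|exact Hd].
Qed.

Lemma proj_coarse_lipschitz (Hgeo : geodesic_space X) x y p q :
  nearest U x p -> nearest U y q -> mdist p q <= mdist x y + 4 * C + 4.
Proof.
  intros Hp Hq. destruct (Hgeo x y) as [l [gam [Hgam [<- <-]]]].
  rewrite (geodesic_length Hgam).
  destruct (Rle_lt_dec (mdist p q) C) as [H|H]; [pose proof (proj1 Hgam); lra|].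
  destruct (geodesic_enters_near_first_proj Hgam Hp Hq H) as [s [Hs Hds]].
  destruct (geodesic_enters_near_last_proj Hgam Hp Hq H) as [s' [Hs' Hds']].
  pose proof (geodesic_dist_le Hgam Hs Hs'). pose proof (mdist_tri p (gam s) q).
  pose proof (mdist_tri (gam s) (gam s') q). rewrite (mdist_sym p (gam s)) in *.
  unfold Rabs in *; destruct Rcase_abs; lra.
Qed.

Lemma proj_start_near_first_visit x y la (al : R -> X) s1 s2 R0 p :
  U x -> between U x y -> is_geodesic la al -> 0 <= s1 <= s2 -> s2 <= la ->
  mdist (al s1) x <= R0 -> mdist (al s2) y <= R0 ->
  nearest U (al 0) p -> mdist p x <= 2 * C + 2 + 2 * R0.
Proof.
  intros Ux Hxy Hal Hs12 Hs2 Hx Hy Hp.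
  destruct (Hnear (al s1)) as [w Hw].
  pose proof (proj2 Hw x Ux) as Hwx.
  destruct (Rle_lt_dec (mdist p w) C) as [H|H].
  { pose proof (mdist_tri p w x). pose proof (mdist_tri w (al s1) x).
    rewrite (mdist_sym w (al s1)) in *. lra. }
  destruct (geodesic_enters_near_first_proj (geodesic_restrict Hal (s := s1) ltac:(lra)) Hp Hw H)
    as [se [Hse Hde]].
  assert (E1 : mdist (al se) (al s2) = s2 - se) by (apply (geodesic_dist Hal); lra).
  assert (E2 : mdist (al se) (al s1) = s1 - se) by (apply (geodesic_dist Hal); lra).
  assert (E3 : mdist (al s1) (al s2) = s2 - s1) by (apply (geodesic_dist Hal); lra).
  pose proof (mdist_tri (al se) p y). pose proof (mdist_tri (al se) y (al s2)).
  pose proof (mdist_tri p (al se) x). pose proof (mdist_tri (al se) (al s1) x).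
  pose proof (mdist_tri x (al s1) y). pose proof (mdist_tri (al s1) (al s2) y).
  pose proof (Hxy p (proj1 Hp)).
  pose proof (mdist_sym p (al se)). pose proof (mdist_sym y (al s2)).
  pose proof (mdist_sym x (al s1)). pose proof (mdist_sym x p). lra.
Qed.

Lemma proj_end_near_last_visit x y la (al : R -> X) s1 s2 R0 q :
  U y -> between U x y -> is_geodesic la al -> 0 <= s1 <= s2 -> s2 <= la ->
  mdist (al s1) x <= R0 -> mdist (al s2) y <= R0 ->
  nearest U (al la) q -> mdist q y <= 2 * C + 2 + 2 * R0.
Proof.
  intros Uy Hxy Hal Hs12 Hs2 Hx Hy Hq.
  apply (@proj_start_near_first_visit y x la (fun s => al (la - s)) (la - s2) (la - s1));
    auto using between_sym, geodesic_reverse; try lra.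
  - replace (la - (la - s2)) with s2 by ring. exact Hy.
  - replace (la - (la - s1)) with s1 by ring. exact Hx.
  - rewrite Rminus_0_r. exact Hq.
Qed.

Lemma fellow_traveller_visits (Hgeo : geodesic_space X) x y la (al : R -> X) lb (be : R -> X)
    s1 s2 R0 e :
  U x -> U y -> between U x y ->
  is_geodesic la al -> 0 <= s1 <= s2 -> s2 <= la ->
  mdist (al s1) x <= R0 -> mdist (al s2) y <= R0 ->
  is_geodesic lb be -> mdist (al 0) (be 0) <= e -> mdist (al la) (be lb) <= e ->
  13 * C + 12 + 4 * R0 + 2 * e < mdist x y ->
  (exists u, 0 <= u <= lb /\ mdist (be u) x <= 8 * C + 8 + 2 * R0 + e) /\
  (exists u, 0 <= u <= lb /\ mdist (be u) y <= 8 * C + 8 + 2 * R0 + e).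
Proof.
  intros Ux Uy Hxy Hal Hs12 Hs2 Hx Hy Hbe H0 Hl Hfar.
  destruct (Hnear (al 0)) as [p Hp]. destruct (Hnear (al la)) as [q Hq].
  destruct (Hnear (be 0)) as [p' Hp']. destruct (Hnear (be lb)) as [q' Hq'].
  pose proof (proj_start_near_first_visit Ux Hxy Hal Hs12 Hs2 Hx Hy Hp) as Hpx.
  pose proof (proj_end_near_last_visit Uy Hxy Hal Hs12 Hs2 Hx Hy Hq) as Hqy.
  pose proof (proj_coarse_lipschitz Hgeo Hp Hp') as Hpp'.
  pose proof (proj_coarse_lipschitz Hgeo Hq Hq') as Hqq'.
  assert (Hgap : C < mdist p' q').
  { pose proof (mdist_tri x p p'). pose proof (mdist_tri x p' q'). pose proof (mdist_tri x q' y).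
    pose proof (mdist_tri q' q y). rewrite (mdist_sym x p), (mdist_sym q' q) in *. lra. }
  split.
  - destruct (geodesic_enters_near_first_proj Hbe Hp' Hq' Hgap) as [u [Hu Hd]].
    exists u; split; [exact Hu|].
    pose proof (mdist_tri (be u) p' x). pose proof (mdist_tri p' p x).
    rewrite (mdist_sym p' p) in *. lra.
  - destruct (geodesic_enters_near_last_proj Hbe Hp' Hq' Hgap) as [u [Hu Hd]].
    exists u; split; [exact Hu|].
    pose proof (mdist_tri (be u) q' y). pose proof (mdist_tri q' q y).
    rewrite (mdist_sym q' q) in *. lra.
Qed.

Lemma fellow_traveller_visits_any_order (Hgeo : geodesic_space X) x y la (al : R -> X) lb (be : R -> X)
    s1 s2 R0 e :
  U x -> U y -> between U x y ->
  is_geodesic la al -> 0 <= s1 <= la -> 0 <= s2 <= la ->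
  mdist (al s1) x <= R0 -> mdist (al s2) y <= R0 ->
  is_geodesic lb be -> mdist (al 0) (be 0) <= e -> mdist (al la) (be lb) <= e ->
  13 * C + 12 + 4 * R0 + 2 * e < mdist x y ->
  (exists u, 0 <= u <= lb /\ mdist (be u) x <= 8 * C + 8 + 2 * R0 + e) /\
  (exists u, 0 <= u <= lb /\ mdist (be u) y <= 8 * C + 8 + 2 * R0 + e).
Proof.
  intros Ux Uy Hxy Hal Hs1 Hs2 Hx Hy Hbe H0 Hl Hfar.
  destruct (Rle_lt_dec s1 s2) as [H12|H21].
  - apply (fellow_traveller_visits Hgeo Ux Uy Hxy Hal (conj (proj1 Hs1) H12) (proj2 Hs2)); auto.
  - rewrite mdist_sym in Hfar. apply and_comm.
    apply (fellow_traveller_visits Hgeo Uy Ux (between_sym Hxy) Hal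
             (conj (proj1 Hs2) (Rlt_le _ _ H21)) (proj2 Hs1)); auto.
Qed.

End ContractingSet.

Lemma seg_between (X : MetricSpace) D (gm : R -> X) :
  is_geodesic D gm -> between (seg gm 0 D) (gm 0) (gm D).
Proof.
  intros Hgm u [c [Hc ->]].
  rewrite !(geodesic_dist Hgm) by (pose proof (proj1 Hgm); lra). ring.
Qed.

Lemma translated_axis_fellow_traveller (G : Group) (X : MetricSpace) (act : G -> X -> X) (t : G)
    C D (gm : R -> X) la (al : R -> X) lb (be : R -> X) s1 s2 R0 e :
  isometric_action act -> geodesic_space X -> 0 <= C ->
  is_geodesic D gm -> contracting_set C (seg gm 0 D) ->
  is_geodesic la al -> 0 <= s1 <= la -> 0 <= s2 <= la ->
  mdist (al s1) (act t (gm 0)) <= R0 -> mdist (al s2) (act t (gm D)) <= R0 ->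
  is_geodesic lb be -> mdist (al 0) (be 0) <= e -> mdist (al la) (be lb) <= e ->
  13 * C + 12 + 4 * R0 + 2 * e < D ->
  (exists u, 0 <= u <= lb /\ mdist (be u) (act t (gm 0)) <= 8 * C + 8 + 2 * R0 + e) /\
  (exists u, 0 <= u <= lb /\ mdist (be u) (act t (gm D)) <= 8 * C + 8 + 2 * R0 + e).
Proof.
  intros [Hact1 [Hactm Hiso]] Hgeo HC Hgm HU Hal Hs1 Hs2 Hx Hy Hbe H0 Hl HD.
  assert (Hinv : forall z w, mdist (act (ginv t) z) w = mdist z (act t w)).
  { intros z w. rewrite <- (Hiso t), <- Hactm, (gmulVr G), Hact1. reflexivity. }
  pose proof (proj1 Hgm).
  destruct (@fellow_traveller_visits_any_order X (seg gm 0 D) C HC HU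
              (fun z => nearest_seg_exists z Hgm) Hgeo (gm 0) (gm D)
              la (fun s => act (ginv t) (al s)) lb (fun s => act (ginv t) (be s)) s1 s2 R0 e)
    as [[u1 [Hu1 Hd1]] [u2 [Hu2 Hd2]]];
    try rewrite ?Hiso, ?Hinv; auto using geodesic_isometry, seg_between.
  - exists 0; split; [lra|reflexivity].
  - exists D; split; [lra|reflexivity].
  - rewrite (geodesic_length Hgm). exact HD.
  - rewrite Hinv in Hd1, Hd2. split; [exists u1|exists u2]; auto.
Qed.

Lemma geodesic_params_close (X : MetricSpace) la (al : R -> X) lb (be : R -> X) e z s u R1 K :
  is_geodesic la al -> is_geodesic lb be -> mdist (al 0) (be 0) <= e ->
  0 <= s <= la -> 0 <= u <= lb -> mdist z (al s) <= R1 -> mdist (be u) z <= K ->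
  Rabs (u - s) <= e + K + R1.
Proof.
  intros Hal Hbe H0 Hs Hu Hz Hu'.
  assert (Eb : mdist (be 0) (be u) = u) by (rewrite (geodesic_dist Hbe); lra).
  assert (Ea : mdist (al 0) (al s) = s) by (rewrite (geodesic_dist Hal); lra).
  pose proof (mdist_tri (be 0) (al 0) (be u)). pose proof (mdist_tri (al 0) (al s) (be u)).
  pose proof (mdist_tri (al s) z (be u)). pose proof (mdist_tri (al 0) (be 0) (al s)).
  pose proof (mdist_tri (be 0) (be u) (al s)). pose proof (mdist_tri (be u) z (al s)).
  rewrite (mdist_sym (be 0) (al 0)), (mdist_sym (al s) z), (mdist_sym z (be u)),
    (mdist_sym (be u) (al s)) in *.
  unfold Rabs; destruct Rcase_abs; lra.
Qed.

Lemma window_two_points lb w E u1 u2 :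
  0 <= w <= lb -> 0 <= E -> 0 <= u1 <= lb -> 0 <= u2 <= lb -> Rabs (u1 - u2) <= w + E ->
  exists a, 0 <= a /\ a + w <= lb /\
    (exists v1, a <= v1 <= a + w /\ Rabs (u1 - v1) <= E) /\
    (exists v2, a <= v2 <= a + w /\ Rabs (u2 - v2) <= E).
Proof.
  intros Hw HE Hu1 Hu2 H12.
  pose proof (Rle_abs (u1 - u2)).
  pose proof (Rle_abs (u2 - u1)) as H21. rewrite Rabs_minus_sym in H21.
  set (a := Rmin (Rmin u1 u2) (lb - w)).
  assert (Ha : a <= u1 /\ a <= u2 /\ a <= lb - w /\ (a = u1 \/ a = u2 \/ a = lb - w)).
  { unfold a, Rmin; repeat destruct Rle_dec; lra. }
  destruct Ha as [Ha1 [Ha2 [Ha3 Ha]]].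
  assert (Hv : forall u, u = u1 \/ u = u2 -> exists v, a <= v <= a + w /\ Rabs (u - v) <= E).
  { intros u Hu. destruct (Rle_dec u (a + w)).
    - exists u. rewrite Rminus_diag, Rabs_R0. destruct Hu; lra.
    - exists (a + w). rewrite Rabs_pos_eq by lra. destruct Hu, Ha; lra. }
  exists a. split; [unfold a, Rmin; repeat destruct Rle_dec; lra|].
  split; [lra|]. split; apply Hv; auto.
Qed.

Lemma theta_window_transfer (X : MetricSpace) la (al : R -> X) lb (be : R -> X) e theta a
    s1 s2 u1 u2 {z1 z2 : X} R1 K :
  is_geodesic la al -> is_geodesic lb be ->
  mdist (al 0) (be 0) <= e -> mdist (al la) (be lb) <= e ->
  0 < theta <= 1 -> 0 <= a -> a + theta * la <= la ->
  a <= s1 <= a + theta * la -> a <= s2 <= a + theta * la ->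
  0 <= u1 <= lb -> 0 <= u2 <= lb ->
  mdist z1 (al s1) <= R1 -> mdist z2 (al s2) <= R1 ->
  mdist (be u1) z1 <= K -> mdist (be u2) z2 <= K ->
  exists a', 0 <= a' /\ a' + theta * lb <= lb /\
    dist_set_le z1 (seg be a' (a' + theta * lb)) (3 * K + 4 * e + 2 * R1) /\
    dist_set_le z2 (seg be a' (a' + theta * lb)) (3 * K + 4 * e + 2 * R1).
Proof.
  intros Hal Hbe H0 Hl Hth Ha Hala Hs1 Hs2 Hu1 Hu2 Hz1 Hz2 Hb1 Hb2.
  pose proof (proj1 Hal). pose proof (proj1 Hbe).
  assert (0 <= theta * la) by nra.
  assert (Hlen : la <= lb + 2 * e).
  { rewrite <- (geodesic_length Hal), <- (geodesic_length Hbe).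
    pose proof (mdist_tri (al 0) (be 0) (al la)). pose proof (mdist_tri (be 0) (be lb) (al la)).
    rewrite (mdist_sym (be lb) (al la)) in *. lra. }
  pose proof (geodesic_params_close z1 (s := s1) Hal Hbe H0 ltac:(lra) Hu1 Hz1 Hb1) as Hc1.
  pose proof (geodesic_params_close z2 (s := s2) Hal Hbe H0 ltac:(lra) Hu2 Hz2 Hb2) as Hc2.
  pose proof (Defs.dist_ge0 X (al 0) (be 0)). pose proof (Defs.dist_ge0 X (be u1) z1).
  pose proof (Defs.dist_ge0 X z1 (al s1)).
  assert (HE : 0 <= 2 * e + 2 * (e + K + R1)) by lra.
  assert (H12 : Rabs (u1 - u2) <= theta * lb + (2 * e + 2 * (e + K + R1))).
  { assert (theta * la <= theta * lb + 2 * e) by nra.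
    revert Hc1 Hc2. unfold Rabs; repeat destruct Rcase_abs; intros; lra. }
  assert (Hw : 0 <= theta * lb <= lb) by nra.
  destruct (window_two_points Hw HE Hu1 Hu2 H12)
    as [a' [Ha' [Ha'l [[v1 [Hv1 Hd1]] [v2 [Hv2 Hd2]]]]]].
  exists a'. split; [exact Ha'|]. split; [exact Ha'l|].
  split; [apply (seg_point_dist_set_le _ _ _ Hv1)|apply (seg_point_dist_set_le _ _ _ Hv2)].
  - assert (Hv1l : 0 <= v1 <= lb) by lra.
    pose proof (mdist_tri z1 (be u1) (be v1)). pose proof (geodesic_dist_le Hbe Hu1 Hv1l).
    rewrite (mdist_sym z1 (be u1)) in *. lra.
  - assert (Hv2l : 0 <= v2 <= lb) by lra.
    pose proof (mdist_tri z2 (be u2) (be v2)). pose proof (geodesic_dist_le Hbe Hu2 Hv2l).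
    rewrite (mdist_sym z2 (be u2)) in *. lra.
Qed.

Lemma Ef_gone (G : Group) (f : G) : Ef f gone.
Proof.
  exists 1%Z. split; [lia|]. left.
  assert (Hinv1 : ginv (gone : G) = gone) by (rewrite <- (gmul1l G (ginv gone)); apply gmulVr).
  rewrite gmul1l, Hinv1, gmul1r. reflexivity.
Qed.

Lemma has_barrier_theta_seg_mono (G : Group) (X : MetricSpace) (act : G -> X -> X) o r r' h
    theta l (gam : R -> X) :
  r <= r' -> has_barrier_theta_seg act o r h theta l gam ->
  has_barrier_theta_seg act o r' h theta l gam.
Proof.
  intros Hr [a [Ha [Hal [t [H1 H2]]]]].
  exists a; split; [exact Ha|]; split; [exact Hal|].
  exists t; split; eapply dist_set_le_mono; eauto.
Qed.

Lemma barrier_at_start (G : Group) (X : MetricSpace) (act : G -> X -> X) o h theta lb (be : R -> X) M :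
  isometric_action act -> is_geodesic lb be -> 0 < theta <= 1 -> mdist o (be 0) <= M ->
  has_barrier_theta_seg act o (mdist o (act h o) + M) h theta lb be.
Proof.
  intros [Hact1 _] Hbe Hth Hbe0. pose proof (proj1 Hbe).
  exists 0. split; [lra|]. split; [nra|]. exists gone.
  split; apply (seg_point_dist_set_le _ _ _ (s := 0)); try nra.
  - rewrite Hact1. pose proof (Defs.dist_ge0 X o (act h o)). lra.
  - rewrite gmul1l. pose proof (mdist_tri (act h o) o (be 0)). rewrite (mdist_sym (act h o) o) in *. lra.
Qed.

Lemma barrier_transfer_long_axis (G : Group) (X : MetricSpace) (act : G -> X -> X) (o : X) (f : G)
    C r e h theta la (al : R -> X) lb (be : R -> X) :
  isometric_action act -> geodesic_space X -> 0 <= C ->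
  (forall (l : R) (gam : R -> X), is_geodesic l gam ->
     Ax act o f (gam 0) -> Ax act o f (gam l) -> contracting_set C (seg gam 0 l)) ->
  Ef f h -> 13 * C + 12 + 4 * (r + 1) + 2 * e < mdist o (act h o) ->
  0 < theta <= 1 -> is_geodesic la al -> is_geodesic lb be ->
  mdist (al 0) (be 0) <= e -> mdist (al la) (be lb) <= e ->
  has_barrier_theta_seg act o r h theta la al ->
  has_barrier_theta_seg act o (3 * (8 * C + 8 + 2 * (r + 1) + e) + 4 * e + 2 * (r + 1))
    h theta lb be.
Proof.
  intros Hact Hgeo HC Hax Hh Hlong Hth Hal Hbe H0 Hl [a [Ha [Hala [t [Ht1 Ht2]]]]].
  destruct (dist_set_le_seg_point Ht1) as [s1 [Hs1 Hd1]].
  destruct (dist_set_le_seg_point Ht2) as [s2 [Hs2 Hd2]].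
  destruct (Hgeo o (act h o)) as [D [gm [Hgm [Hgm0 HgmD]]]].
  assert (HU : contracting_set C (seg gm 0 D)).
  { apply Hax; [exact Hgm| |].
    - exists gone. split; [apply Ef_gone|]. rewrite Hgm0. symmetry. apply (proj1 Hact).
    - exists h. auto. }
  assert (Hthla : 0 <= theta * la) by (pose proof (proj1 Hal); nra).
  assert (Hs1la : 0 <= s1 <= la) by lra. assert (Hs2la : 0 <= s2 <= la) by lra.
  assert (Hx : mdist (al s1) (act t (gm 0)) <= r + 1) by (rewrite Hgm0, mdist_sym; lra).
  assert (Hy : mdist (al s2) (act t (gm D)) <= r + 1)
    by (rewrite HgmD, <- (proj1 (proj2 Hact)), mdist_sym; lra).
  assert (HD : 13 * C + 12 + 4 * (r + 1) + 2 * e < D)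
    by (rewrite <- (geodesic_length Hgm), Hgm0, HgmD; exact Hlong).
  destruct (translated_axis_fellow_traveller t Hact Hgeo HC Hgm HU Hal
              Hs1la Hs2la Hx Hy Hbe H0 Hl HD) as [[u1 [Hu1 Hb1]] [u2 [Hu2 Hb2]]].
  rewrite Hgm0 in Hb1. rewrite HgmD, <- (proj1 (proj2 Hact)) in Hb2.
  destruct (theta_window_transfer Hal Hbe H0 Hl Hth Ha Hala Hs1 Hs2 Hu1 Hu2
              (Rlt_le _ _ Hd1) (Rlt_le _ _ Hd2) Hb1 Hb2) as [a' [Ha' [Ha'l [Hw1 Hw2]]]].
  exists a'; split; [exact Ha'|]; split; [exact Ha'l|]. exists t; auto.
Qed.

Theorem lemma4p3 (G : Group) (X : MetricSpace) (act : G -> X -> X) (o : X) (f : G) (C : R) :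
  isometric_action act -> proper_action act -> proper_space X -> geodesic_space X ->
  contracting_element act o f -> 0 < C ->
  (forall (l : R) (gam : R -> X), is_geodesic l gam ->
     Ax act o f (gam 0) -> Ax act o f (gam l) -> contracting_set C (seg gam 0 l)) ->
  forall M : R, 0 < M ->
  exists L1 : R, 0 < L1 /\
  forall r : R, 0 < r ->
  exists rhat : R,
  forall (h g : G) (theta : R) (la : R) (alpha : R -> X) (lb : R) (beta : R -> X),
    Ef f h -> L1 < mdist o (act h o) ->
    0 < theta <= 1 ->
    is_geodesic la alpha -> mdist o (alpha 0) <= M -> mdist (act g o) (alpha la) <= M ->
    is_geodesic lb beta -> mdist o (beta 0) <= M -> mdist (act g o) (beta lb) <= M ->
    has_barrier_theta_seg act o r h theta la alpha ->
    has_barrier_theta_seg act o rhat h theta lb beta.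
Proof.
  intros Hact _ _ Hgeo _ HC Hax M HM.
  exists 1; split; [lra|]. intros r Hr.
  set (T := 13 * C + 12 + 4 * (r + 1) + 2 * (2 * M)).
  set (rlong := 3 * (8 * C + 8 + 2 * (r + 1) + 2 * M) + 4 * (2 * M) + 2 * (r + 1)).
  exists (Rmax (T + M) rlong).
  intros h g theta la al lb be Hh _ Hth Hal Hal0 Hall Hbe Hbe0 Hbel Hbar.
  destruct (Rle_lt_dec (mdist o (act h o)) T) as [Hshort|Hlong].
  - apply (has_barrier_theta_seg_mono (r := mdist o (act h o) + M)).
    + pose proof (Rmax_l (T + M) rlong). lra.
    + exact (barrier_at_start o h Hact Hbe Hth Hbe0).
  - apply (has_barrier_theta_seg_mono (Rmax_r (T + M) rlong)).
    exact (barrier_transfer_long_axis Hact Hgeo (Rlt_le _ _ HC) Hax Hh Hlong Hth Hal Hbe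
             (mdist_le_via_center Hal0 Hbe0) (mdist_le_via_center Hall Hbel) Hbar).
Qed.
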